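(* Let $(X,\ast,u,d)$ be a finite GL-rack, let $\Delta=\alpha_1\cdots\alpha_n$ be the disjoint cycle decomposition of its diagonal map (fixed points counted as $1$-cycles), $A_i=\operatorname{supp}(\alpha_i)$, and let $B_1,\dots,B_m$ be the sets obtained by taking, for each cycle length $\ell$ occurring, the union of all $A_i$ with $|A_i|=\ell$. Then for each $1\le j\le m$, $B_j$ is closed under $\ast$, $u$ and $d$, and $(B_j,\ast|_{B_j},u|_{B_j},d|_{B_j})$ is a GL-rack.
   Context: A rack is a set $X$ with a binary operation $\ast$ such that for every $y\in X$ the map $x\mapsto x\ast y$ is a bijection of $X$ and $(x\ast y)\ast z=(x\ast z)\ast(y\ast z)$ for all $x,y,z$. A GL-rack is a quadruple $(X,\ast,u,d)$ where $(X,\ast)$ is a rack and $u,d\colon X\to X$ are maps such that for all $x,y\in X$: $u(d(x\ast x))=d(u(x\ast x))=x$; $u(x\ast y)=u(x)\ast y$ and $d(x\ast y)=d(x)\ast y$; $x\ast u(y)=x\ast d(y)=x\ast y$. The diagonal map is $\Delta(x)=x\ast x$; for a finite GL-rack it is a bijection (rack automorphism) and $\Delta=(u\circ d)^{-1}$. *)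

From mathcomp Require Import all_boot.
Set Implicit Arguments. Unset Strict Implicit. Unset Printing Implicit Defensive.

Definition is_rack_on (X : finType) (B : {set X}) (op : X -> X -> X) : Prop :=
  [/\ (forall x y, x \in B -> y \in B -> op x y \in B),
      (forall y z, y \in B -> z \in B -> exists! x, x \in B /\ op x y = z)
    & (forall x y z, x \in B -> y \in B -> z \in B ->
         op (op x y) z = op (op x z) (op y z))].

Definition is_GLrack_on (X : finType) (B : {set X}) (op : X -> X -> X)
    (u d : X -> X) : Prop :=
  [/\ is_rack_on B op,
      (forall x, x \in B -> u x \in B /\ d x \in B),
      (forall x, x \in B -> u (d (op x x)) = x /\ d (u (op x x)) = x),
      (forall x y, x \in B -> y \in B -> u (op x y) = op (u x) y /\ d (op x y) = op (d x) y)
    & (forall x y, x \in B -> y \in B -> op x (u y) = op x y /\ op x (d y) = op x y)].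

Definition is_GLrack (X : finType) (op : X -> X -> X) (u d : X -> X) : Prop :=
  is_GLrack_on [set: X] op u d.

Definition diag (X : Type) (op : X -> X -> X) (x : X) : X := op x x.

(* B_l: union of the supports of all cycles of Delta of length l
   (the cycle of x under Delta has length order (diag op) x). *)
Definition cycle_class (X : finType) (op : X -> X -> X) (l : nat) : {set X} :=
  [set x | order (diag op) x == l].

From mathcomp Require Import all_boot.

Set Implicit Arguments.
Unset Strict Implicit.
Unset Printing Implicit Defensive.

(* In a finite GL-rack the diagonal commutes with every right translation
   (by self-distributivity) and with u and d; all of these maps are
   injective, so they carry each cycle of the diagonal onto a cycle of the
   same length. Hence every cycle class is stable under the operations, and
   the GL-rack axioms, being universal statements, restrict to it. *)

Lemma order_commute (T : finType) (f g : T -> T) :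
  injective f -> injective g -> f \o g =1 g \o f -> forall x, order f (g x) = order f x.
Proof.
move=> f_inj g_inj fg x.
have g_orbit : fcycle f (map g (orbit f x)).
  rewrite cycle_map; apply: sub_cycle (cycle_orbit f_inj x).
  by move=> a b /= /eqP <-; apply/eqP/fg.
rewrite (order_cycle g_orbit); first by rewrite size_map size_orbit.
  by rewrite map_inj_uniq // orbit_uniq.
by rewrite map_f // in_orbit.
Qed.

Section GLRack.

Variables (X : finType) (op : X -> X -> X) (u d : X -> X).
Hypothesis glX : is_GLrack op u d.

Let rackX : is_rack_on [set: X] op. Proof. by case: glX. Qed.

Lemma GLrack_diag_opl x y : diag op (op x y) = op (diag op x) y.
Proof. by case: rackX => _ _ sd; rewrite /diag (sd x x y) ?in_setT. Qed.

Lemma GLrack_rinj y : injective (op^~ y).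
Proof.
case: rackX => _ bij _ a b /= eq_ab.
have [x [_ uniq_x]] := bij y (op a y) (in_setT y) (in_setT _).
by rewrite -(uniq_x a) ?(uniq_x b) ?in_setT.
Qed.

Lemma GLrack_udK : cancel (d \o diag op) u.
Proof. by case: glX => _ _ ud _ _ x; case: (ud x (in_setT x)). Qed.

Lemma GLrack_duK : cancel (u \o diag op) d.
Proof. by case: glX => _ _ ud _ _ x; case: (ud x (in_setT x)). Qed.

Lemma GLrack_diag_inj : injective (diag op).
Proof. exact: (@can_inj _ _ _ (u \o d)) GLrack_udK. Qed.

(* u has the right inverse d \o diag op, which on a finite type forces
   it to be a bijection. *)
Lemma GLrack_u_inj : injective u.
Proof. exact/can_inj/canF_sym/GLrack_udK. Qed.

Lemma GLrack_d_inj : injective d.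
Proof. exact/can_inj/canF_sym/GLrack_duK. Qed.

Lemma GLrack_diag_u : diag op \o u =1 u \o diag op.
Proof.
case: glX => _ _ _ u_op op_u x.
rewrite /diag /= (op_u _ _ (in_setT _) (in_setT _)).1.
by rewrite (u_op _ _ (in_setT _) (in_setT _)).1.
Qed.

Lemma GLrack_diag_d : diag op \o d =1 d \o diag op.
Proof.
case: glX => _ _ _ d_op op_d x.
rewrite /diag /= (op_d _ _ (in_setT _) (in_setT _)).2.
by rewrite (d_op _ _ (in_setT _) (in_setT _)).2.
Qed.

Lemma order_diag_opl x y : order (diag op) (op x y) = order (diag op) x.
Proof.
exact: (order_commute GLrack_diag_inj (@GLrack_rinj y) (GLrack_diag_opl^~ y) x).
Qed.

Lemma order_diag_u x : order (diag op) (u x) = order (diag op) x.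
Proof. exact: order_commute GLrack_diag_inj GLrack_u_inj GLrack_diag_u x. Qed.

Lemma order_diag_d x : order (diag op) (d x) = order (diag op) x.
Proof. exact: order_commute GLrack_diag_inj GLrack_d_inj GLrack_diag_d x. Qed.

Lemma GLrack_on_invariant (B : {set X}) :
    (forall x y, (op x y \in B) = (x \in B)) ->
    (forall x, x \in B -> u x \in B /\ d x \in B) ->
  is_GLrack_on B op u d.
Proof.
move=> opB udB; case: glX => [[_ bij sd] _ ud u_op op_u].
have restrict_bij y z : z \in B -> exists! x, x \in B /\ op x y = z.
  move=> zB; have [x [[_ def_z] uniq_x]] := bij y z (in_setT y) (in_setT z).
  exists x; split=> [|x' [_ def_z']]; first by rewrite -(opB x y) def_z.
  by apply: uniq_x; rewrite in_setT.
split=> // [|x xB|x y xB yB|x y xB yB].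
- split=> [x y xB _|y z _ zB|x y z _ _ _]; first by rewrite opB.
    exact: restrict_bij.
  by rewrite sd ?in_setT.
- exact: ud (in_setT x).
- exact: u_op (in_setT x) (in_setT y).
- exact: op_u (in_setT x) (in_setT y).
Qed.

Lemma cycle_class_opl l x y :
  (op x y \in cycle_class op l) = (x \in cycle_class op l).
Proof. by rewrite !inE order_diag_opl. Qed.

Lemma cycle_class_ud l x :
  x \in cycle_class op l -> u x \in cycle_class op l /\ d x \in cycle_class op l.
Proof. by rewrite !inE order_diag_u order_diag_d. Qed.

End GLRack.

Theorem lemma3p6 (X : finType) (op : X -> X -> X) (u d : X -> X) :
  is_GLrack op u d ->
  forall l : nat, (exists x : X, order (diag op) x = l) ->
  (forall x y, x \in cycle_class op l -> y \in cycle_class op l ->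
      op x y \in cycle_class op l) /\
  (forall x, x \in cycle_class op l ->
      u x \in cycle_class op l /\ d x \in cycle_class op l) /\
  is_GLrack_on (cycle_class op l) op u d.
Proof.
move=> glX l _.
have ud_class := cycle_class_ud glX (l := l).
split; first by move=> x y xB _; rewrite (cycle_class_opl glX).
split; first exact: ud_class.
exact/GLrack_on_invariant/ud_class/(cycle_class_opl glX).
Qed.
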